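(* For all natural numbers $n\geq 1$, \[a_3(n)=3p(n)-p(n+1)-2p(n+2)+p(n+3).\]
   Context: $p(n)$ denotes the number of partitions of $n$. $a_3(n)$ denotes the number of partitions of $n$ in which the smallest part occurs at least $3$ times. *)

From mathcomp Require Import all_boot all_order all_algebra.
Set Implicit Arguments. Unset Strict Implicit. Unset Printing Implicit Defensive.

Definition is_partition (n : nat) (s : seq nat) : bool :=
  all (fun x => 0 < x) s && sorted geq s && (sumn s == n).

Fixpoint bseqs (k m : nat) : seq (seq nat) :=
  match k with
  | 0 => [:: [::]]
  | k'.+1 => flatten [seq [seq i :: s | s <- bseqs k' m] | i <- iota 1 m]
  end.

(* every partition of n has at most n parts, each at most n *)
Definition candidates (n : nat) : seq (seq nat) :=
  flatten [seq bseqs k n | k <- iota 0 n.+1].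

Definition partitions (n : nat) : seq (seq nat) :=
  undup [seq s <- candidates n | is_partition n s].

Definition p (n : nat) : nat := size (partitions n).

Definition smallest_part (s : seq nat) : nat := foldr minn (head 0 s) s.

Definition a3 (n : nat) : nat :=
  count (fun s => 3 <= count_mem (smallest_part s) s) (partitions n).

From mathcomp Require Import all_boot all_order all_algebra zify ring.
Import GRing.Theory.
Set Implicit Arguments. Unset Strict Implicit.

(* Let c_s(m) be the number of partitions of m into parts >= s, with c_s(m) = 0
   for m < 0.  Stripping copies of the smallest part gives
   c_s(m) = c_(s+1)(m) + c_s(m - s) and a_3(n) = sum_(s >= 1) c_s(n - 3s).
   By the first recurrence, c_s(n - 3s) = T_s - T_(s+1) for the combination
   T_s = c_s(n) - c_s(n+1) - c_s(n+2) + c_s(n+3)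
         + c_s(n+1-s) - c_s(n+3-s) + c_s(n+2-2s),
   which vanishes for s > n + 3 when n >= 1; so the sum telescopes to T_1,
   and c_1 = p. *)

Lemma count_bij (T1 T2 : eqType) (l1 : seq T1) (l2 : seq T2)
    (a1 : pred T1) (a2 : pred T2) (f : T1 -> T2) :
  uniq l1 -> uniq l2 -> injective f ->
  (forall x, x \in l1 -> a1 x -> (f x \in l2) && a2 (f x)) ->
  (forall y, y \in l2 -> a2 y -> exists2 x, (x \in l1) && a1 x & y = f x) ->
  count a2 l2 = count a1 l1.
Proof.
move=> uniq1 uniq2 f_inj f_into f_onto.
rewrite -!size_filter -(size_map f); apply/perm_size/uniq_perm.
- exact: filter_uniq.
- by rewrite map_inj_uniq ?filter_uniq.
move=> y; rewrite mem_filter; apply/andP/mapP => [[a2y l2y]|[x]].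
  by have [x x_ok ->] := f_onto y l2y a2y; exists x; rewrite // mem_filter andbC.
by rewrite mem_filter => /andP[a1x l1x] ->; apply/andP; rewrite andbC f_into.
Qed.

Lemma count_sum_fibers (T : eqType) (a : pred T) (f : T -> nat) (r : seq nat) (l : seq T) :
  uniq r -> {in l, forall x, f x \in r} ->
  count a l = \sum_(i <- r) count (fun x => a x && (f x == i)) l.
Proof.
move=> r_uniq; elim: l => [_|x l IH f_in] /=; first by rewrite big1.
rewrite big_split /= -IH => [|y y_l]; last by rewrite f_in ?inE ?y_l ?orbT.
congr (_ + _); rewrite (bigD1_seq (f x)) ?f_in ?mem_head //= eqxx andbT.
by rewrite big1 ?addn0 // => i; rewrite eq_sym => /negPf ->; rewrite andbF.
Qed.

Lemma foldr_minn_lower h l : all (leq h) l -> foldr minn h l = h.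
Proof. by elim: l => //= x l IH /andP[h_le_x /IH ->]; apply/minn_idPr. Qed.

Lemma size_leq_sumn s : all (fun x => 0 < x) s -> size s <= sumn s.
Proof. by elim: s => //= x s IH /andP[x_gt0 /IH]; rewrite -add1n; apply: leq_add. Qed.

Lemma mem_leq_sumn x s : x \in s -> x <= sumn s.
Proof.
elim: s => //= y s IH; rewrite in_cons => /predU1P[->|/IH x_le]; first exact: leq_addr.
exact: leq_trans x_le (leq_addl _ _).
Qed.

Lemma all_leq_head y : sorted leq y -> all (leq (head 0 y)) y.
Proof. by case: y => //= h t /(order_path_min leq_trans) ->; rewrite leqnn. Qed.

Lemma head_sorted_min s y : sorted leq y -> all (leq s) y -> s \in y -> head 0 y = s.
Proof.
case: y => //= h t /(order_path_min leq_trans) h_le /andP[s_le _].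
rewrite in_cons => /predU1P[-> //|s_t].
by apply/eqP; rewrite eqn_leq s_le (allP h_le).
Qed.

Lemma sorted_nseq_prefix k s y : sorted leq y -> all (leq s) y ->
  k <= count_mem s y -> y = nseq k s ++ drop k y.
Proof.
elim: k y => [|k IH] [|h t] //= y_sorted y_ge k_lt.
have h_s : h = s.
  apply: (head_sorted_min (y := h :: t)) y_sorted y_ge _.
  by rewrite -has_pred1 has_count (leq_trans _ k_lt).
move: k_lt; rewrite h_s eqxx add1n ltnS => k_le; congr (_ :: _).
by apply: IH k_le; [exact: path_sorted y_sorted | case/andP: y_ge].
Qed.

Lemma sorted_nseq_cat k s z : all (leq s) z -> sorted leq z -> sorted leq (nseq k s ++ z).
Proof.
move=> z_ge z_sorted; elim: k => //= k IH.
rewrite (path_sortedE leq_trans) IH all_cat z_ge !andbT.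
by apply/allP => x /nseqP[-> _].
Qed.

Lemma smallest_part_rev y : sorted leq y -> smallest_part (rev y) = head 0 y.
Proof.
move=> y_sorted; have y_ge := all_leq_head y_sorted.
case: y y_sorted y_ge => [//|h t] _ /= /andP[_ t_ge].
rewrite /smallest_part; set a := head 0 _.
have a_in : a \in h :: t by rewrite /a -nth0 -mem_rev mem_nth // size_rev.
rewrite rev_cons -cats1 foldr_cat /=.
rewrite (minn_idPl _) ?foldr_minn_lower ?all_rev //.
by move: a_in; rewrite inE => /predU1P[-> // | /(allP t_ge)].
Qed.

Lemma mem_bseqs k m s :
  (s \in bseqs k m) = (size s == k) && all (fun x => 0 < x <= m) s.
Proof.
elim: k s => [|k IH] s /=; first by case: s.
apply/allpairsP/idP.
- move=> [[i t] /= [+ + ->]]; rewrite mem_iota IH add1n ltnS.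
  by move=> i_ok /andP[/eqP <- t_ok] /=; rewrite eqxx i_ok t_ok.
- case: s => [|i t] //= /andP[sz /andP[/andP[i_gt0 i_le] t_ok]].
  by exists (i, t); rewrite /= mem_iota add1n ltnS i_gt0 i_le IH -eqSS sz t_ok.
Qed.

Lemma mem_partitions n s : (s \in partitions n) = is_partition n s.
Proof.
rewrite mem_undup mem_filter andb_idr // => /andP[/andP[pos _] /eqP sum_s].
apply/flatten_mapP; exists (size s).
  by rewrite mem_iota ltnS -sum_s size_leq_sumn.
rewrite mem_bseqs eqxx; apply/allP => x s_x.
by rewrite (allP pos) //= -sum_s mem_leq_sumn.
Qed.

(* Listing the parts in increasing order makes the copies of the smallest part a prefix. *)
Definition is_ipartition (m : nat) (y : seq nat) : bool :=
  all (fun x => 0 < x) y && sorted leq y && (sumn y == m).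

Definition ipartitions (m : nat) : seq (seq nat) := map rev (partitions m).

Lemma uniq_ipartitions m : uniq (ipartitions m).
Proof. by rewrite (map_inj_uniq (can_inj (@revK nat))) undup_uniq. Qed.

Lemma mem_ipartitions m y : (y \in ipartitions m) = is_ipartition m y.
Proof.
rewrite -{1}[y]revK (mem_map (can_inj (@revK nat))) mem_partitions.
by rewrite /is_partition /is_ipartition all_rev rev_sorted sumn_rev.
Qed.

Lemma a3_ipartitions n :
  a3 n = count (fun y => 3 <= count_mem (head 0 y) y) (ipartitions n).
Proof.
rewrite /a3 count_map; apply: eq_in_count => x.
rewrite mem_partitions => /andP[/andP[_ x_sorted] _] /=.
by rewrite count_rev -(smallest_part_rev (y := rev x)) ?revK ?rev_sorted.
Qed.

Local Open Scope ring_scope.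

Definition p_geq (s : nat) (M : int) : int :=
  if M is Posz m then (count (all (leq s)) (ipartitions m))%:Z else 0.

Lemma p_geqN s M : M < 0 -> p_geq s M = 0.
Proof. by case: M. Qed.

Lemma count_ipartitions_nseq k s m : (0 < s)%N ->
  (count (fun y => all (leq s) y && (k <= count_mem s y)%N) (ipartitions m))%:Z =
  p_geq s (m%:Z - (k * s)%:Z).
Proof.
move=> s_gt0; have [ks_le | ks_gt] := leqP (k * s) m; last first.
  rewrite p_geqN; last by lia.
  apply/eqP; rewrite eqz_nat -leqn0 leqNgt -has_count; apply/hasPn => y.
  rewrite mem_ipartitions => /andP[/andP[_ y_sorted] /eqP y_sum].
  apply/negP => /andP[y_ge /(sorted_nseq_prefix y_sorted y_ge) y_eq].
  by move: ks_gt; rewrite -y_sum y_eq sumn_cat sumn_nseq mulnC ltnNge leq_addr.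
rewrite subzn //=; congr Posz; apply: (count_bij (f := cat (nseq k s))).
- exact: uniq_ipartitions.
- exact: uniq_ipartitions.
- by move=> z1 z2 /eqP; rewrite eqseq_cat // eqxx => /eqP.
- move=> z; rewrite !mem_ipartitions => /andP[/andP[z_pos z_sorted] /eqP z_sum] z_ge.
  rewrite /is_ipartition !all_cat z_pos z_ge sorted_nseq_cat // sumn_cat sumn_nseq.
  rewrite z_sum mulnC subnKC // count_cat count_nseq /= !eqxx mul1n leq_addr !andbT.
  by apply/andP; split; apply/allP => x /nseqP[-> _].
- move=> y; rewrite mem_ipartitions => /andP[/andP[y_pos y_sorted] /eqP y_sum].
  move=> /andP[y_ge /(sorted_nseq_prefix y_sorted y_ge)].
  move: (drop k y) => z y_eq; exists z => //; move: y_pos y_ge y_sorted y_sum.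
  rewrite y_eq mem_ipartitions /is_ipartition !all_cat sumn_cat sumn_nseq.
  move=> /andP[_ ->] /andP[_ ->] /cat_sorted2[_ ->] <-.
  by rewrite mulnC addKn eqxx.
Qed.

Lemma all_leqS s y : all (leq s.+1) y = all (leq s) y && (count_mem s y == 0)%N.
Proof.
elim: y => //= x y ->.
by case: ltngtP => //= _; rewrite ?add0n ?add1n /= ?andbF.
Qed.

Lemma p_geqS s M : (0 < s)%N -> p_geq s.+1 M = p_geq s M - p_geq s (M - s%:Z).
Proof.
move=> s_gt0; case: M => [m|m]; last by rewrite /= p_geqN ?subr0 //; lia.
have := count_ipartitions_nseq 1 m s_gt0; rewrite mul1n => <- /=.
apply/eqP; rewrite eq_sym subr_eq -PoszD eqz_nat; apply/eqP.
elim: (ipartitions m) => //= y L ->; rewrite all_leqS lt0n.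
by case: (all (leq s) y); case: (count_mem s y == 0)%N; rewrite /= ?add0n ?add1n ?addnS.
Qed.

Lemma p_geq_eq0 s M : M != 0 -> M < s%:Z -> p_geq s M = 0.
Proof.
case: M => [m|//] m_neq0 m_lt_s; have m_gt0 : (0 < m)%N by lia.
congr Posz; apply/eqP; rewrite -leqn0 leqNgt -has_count; apply/hasPn => y.
rewrite mem_ipartitions => /andP[_ /eqP]; case: y => [|h t] /= y_sum.
  by move: m_gt0; rewrite -y_sum.
apply/negP => /andP[s_le_h _]; move: m_lt_s; rewrite -y_sum; lia.
Qed.

Lemma p_geq1 m : p_geq 1 m%:Z = (p m)%:Z.
Proof.
rewrite /= /p -(size_map rev) -count_predT; congr Posz.
by apply: eq_in_count => y; rewrite mem_ipartitions => /andP[/andP[]].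
Qed.

Lemma a3_sum n K : (0 < n)%N -> (n <= K)%N ->
  (a3 n)%:Z = \sum_(1 <= s < K.+1) p_geq s (n%:Z - (3 * s)%:Z).
Proof.
move=> n_gt0 n_le_K.
rewrite a3_ipartitions.
rewrite (count_sum_fibers _ (f := head 0) (r := index_iota 1 K.+1)) ?iota_uniq //.
  rewrite -natz natr_sum; apply: eq_big_nat => s /andP[s_gt0 _].
  rewrite natz -count_ipartitions_nseq //; congr Posz; apply: eq_in_count => y.
  rewrite mem_ipartitions => /andP[/andP[_ y_sorted] _] /=.
  apply/andP/andP => [[y_3 /eqP y_s] | [y_ge y_3]].
    by rewrite -y_s all_leq_head.
  suff -> : head 0 y = s by [].
  by apply: head_sorted_min => //; rewrite -has_pred1 has_count (leq_trans _ y_3).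
move=> y; rewrite mem_ipartitions /is_ipartition mem_index_iota.
case: y => [|h t] /=; first by case: n n_gt0 n_le_K.
move=> /andP[/andP[/andP[h_gt0 _] _] /eqP y_sum].
by rewrite h_gt0 ltnS (leq_trans _ n_le_K) // -y_sum leq_addr.
Qed.

(* The T_s of the header: the coefficient of q^(n+3) in A(q, q^s) / (q^s; q)_oo,
   where A(q, x) = (1 - q)(1 - q^2) - (1 - q^2) x + q x^2 is chosen so that
   A(q, x) - (1 - x) A(q, q x) = x^3.  For n >= 1 it counts the partitions of n
   whose smallest part is at least s and occurs at least 3 times. *)
Definition a3_geq (n s : nat) : int :=
  p_geq s n%:Z - p_geq s (n.+1)%:Z - p_geq s (n.+2)%:Z + p_geq s (n.+3)%:Z
  + p_geq s ((n.+1)%:Z - s%:Z) - p_geq s ((n.+3)%:Z - s%:Z)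
  + p_geq s ((n.+2)%:Z - (2 * s)%:Z).

Lemma a3_geqS n s : (0 < s)%N ->
  a3_geq n s - a3_geq n s.+1 = p_geq s (n%:Z - (3 * s)%:Z).
Proof.
move=> s_gt0; rewrite /a3_geq.
have -> : (n.+1)%:Z - (s.+1)%:Z = n%:Z - s%:Z by lia.
have -> : (n.+3)%:Z - (s.+1)%:Z = (n.+2)%:Z - s%:Z by lia.
have -> : (n.+2)%:Z - (2 * s.+1)%:Z = n%:Z - (2 * s)%:Z by lia.
rewrite !p_geqS //.
have -> : n%:Z - s%:Z - s%:Z = n%:Z - (2 * s)%:Z by lia.
have -> : (n.+2)%:Z - s%:Z - s%:Z = (n.+2)%:Z - (2 * s)%:Z by lia.
have -> : n%:Z - (2 * s)%:Z - s%:Z = n%:Z - (3 * s)%:Z by lia.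
ring.
Qed.

Lemma a3_geq_eq0 n s : (0 < n)%N -> (n.+3 < s)%N -> a3_geq n s = 0.
Proof. by move=> n_gt0 s_gt; rewrite /a3_geq !p_geq_eq0; lia. Qed.

Lemma a3_geq1 n :
  a3_geq n 1 = 3 * (p n)%:Z - (p n.+1)%:Z - 2 * (p n.+2)%:Z + (p n.+3)%:Z.
Proof.
rewrite /a3_geq.
have -> : (n.+1)%:Z - 1%:Z = n%:Z by lia.
have -> : (n.+3)%:Z - 1%:Z = (n.+2)%:Z by lia.
have -> : (n.+2)%:Z - (2 * 1)%:Z = n%:Z by lia.
rewrite !p_geq1; ring.
Qed.

Theorem theorem1p4 (n : nat) : (1 <= n)%N ->
  (a3 n)%:Z = 3 * (p n)%:Z - (p n.+1)%:Z - 2 * (p n.+2)%:Z + (p n.+3)%:Z.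
Proof.
move=> n_gt0; rewrite -a3_geq1 (a3_sum n_gt0 (leq_addr 3 n)).
rewrite (telescope_sumr_eq (fun s => - a3_geq n s)) => [|//|s /andP[s_gt0 _]].
  by rewrite a3_geq_eq0 ?oppr0 ?sub0r ?opprK // addn3.
by rewrite -a3_geqS // opprK addrC.
Qed.
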